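(* Let $E\in\mathcal{E}_n$ be an extreme point of $\mathcal{E}_n$ with $r=\mathrm{rank}(E)$, and let $u_1,\ldots,u_n\in\mathbb{R}^r$ satisfy $E=\mathrm{Gram}(u_1,\ldots,u_n)$ and $\mathrm{span}(u_1,\ldots,u_n)=\mathbb{R}^r$. Let $d\ge 1$ and let $Q_1,Q_2:\mathbb{R}^r\to\mathcal{H}_d$ be operator valued quadratic maps such that $Q_1(u_i)=Q_2(u_i)$ for all $i\in\{1,\ldots,n\}$. Then $Q_1=Q_2$.
   Context: $\mathcal{E}_n$ denotes the elliptope: the set of real symmetric positive semidefinite $n\times n$ matrices with all diagonal entries equal to $1$; an extreme point is a point not expressible as a proper convex combination of two distinct points of $\mathcal{E}_n$. $\mathrm{Gram}(u_1,\ldots,u_n)$ is the $n\times n$ matrix with entries $\langle u_i,u_j\rangle$ (standard inner product on $\mathbb{R}^r$). $\mathcal{H}_d$ is the real vector space of $d\times d$ complex Hermitian matrices. An operator valued quadratic map $Q:\mathbb{R}^r\to\mathcal{H}_d$ is a map of the form $Q(x)=\sum_{k,l=1}^r x_kx_l H_{kl}$ for some Hermitian matrices $H_{kl}\in\mathcal{H}_d$ (equivalently, every real coordinate of $Q$, viewing $\mathcal{H}_d\cong\mathbb{R}^{d^2}$, is a real quadratic form on $\mathbb{R}^r$). *)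

From HB Require Import structures.
From mathcomp Require Import all_boot all_order all_algebra.
From mathcomp Require Import complex.
Set Implicit Arguments. Unset Strict Implicit. Unset Printing Implicit Defensive.
Import Order.TTheory GRing.Theory Num.Theory.
Local Open Scope ring_scope.
Local Open Scope complex_scope.

Definition psd (R : rcfType) (n : nat) (A : 'M[R]_n) : Prop :=
  A^T = A /\ forall v : 'rV[R]_n, 0 <= (v *m A *m v^T) 0 0.

Definition elliptope (R : rcfType) (n : nat) (A : 'M[R]_n) : Prop :=
  psd A /\ forall i : 'I_n, A i i = 1.

Definition extreme_elliptope (R : rcfType) (n : nat) (E : 'M[R]_n) : Prop :=
  elliptope E /\
  forall (A B : 'M[R]_n) (t : R), elliptope A -> elliptope B ->
    0 < t -> t < 1 -> E = t *: A + (1 - t) *: B -> A = B.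

Definition Gram (R : rcfType) (n r : nat) (U : 'M[R]_(n, r)) : 'M[R]_n :=
  U *m U^T.

Definition herm_mx (R : rcfType) (d : nat) (H : 'M[R[i]]_d) : Prop :=
  forall i j, H i j = (H j i)^*.

Definition quad_map (R : rcfType) (r d : nat) (H : 'I_r -> 'I_r -> 'M[R[i]]_d)
  (x : 'rV[R]_r) : 'M[R[i]]_d :=
  \sum_(k < r) \sum_(l < r) ((x 0 k * x 0 l)%:C *: H k l).

(** Real and imaginary parts of each entry of an operator valued quadratic map
    are real quadratic forms, so it suffices to show that a real quadratic form
    [x C x^T] vanishing at the rows [u_i] of [U] vanishes identically.  Let [B]
    be the symmetric part of [C] and [W = U B U^T].  Since [W] has zero diagonal
    and [1 +- t B] is positive semidefinite for small [t > 0], both [E + t W]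
    and [E - t W] lie in the elliptope; extremality of [E = U U^T] forces
    [W = 0], and as [U] has a left inverse, [B = 0]. *)
From HB Require Import structures.
From mathcomp Require Import all_boot all_order all_algebra.
From mathcomp Require Import complex.
From mathcomp Require Import ring lra.
Import Order.TTheory GRing.Theory Num.Theory.
Local Open Scope ring_scope.

Section QuadraticForm.
Context {R : realFieldType}.

Definition qform {r : nat} (C : 'M[R]_r) (x : 'rV[R]_r) : R := (x *m C *m x^T) 0 0.

Context {r : nat}.
Implicit Types (B C D : 'M[R]_r) (x : 'rV[R]_r).

Lemma qformE C x : qform C x = \sum_(k < r) \sum_(l < r) x 0 k * x 0 l * C k l.
Proof.
rewrite /qform mxE.
under eq_bigr => l _ do rewrite !mxE big_distrl /=.
rewrite exchange_big /=; apply: eq_bigr => k _; apply: eq_bigr => l _.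
by rewrite mulrAC.
Qed.

Lemma qform_tr C x : qform C^T x = qform C x.
Proof.
by rewrite /qform -[x in x *m C^T](trmxK x) -!trmx_mul mulmxA mxE.
Qed.

Lemma qformD C D x : qform (C + D) x = qform C x + qform D x.
Proof. by rewrite /qform mulmxDr mulmxDl mxE. Qed.

Lemma qformB C D x : qform (C - D) x = qform C x - qform D x.
Proof. by rewrite /qform mulmxBr mulmxBl !mxE. Qed.

Lemma qformZ a C x : qform (a *: C) x = a * qform C x.
Proof. by rewrite /qform -scalemxAr -scalemxAl mxE. Qed.

Lemma qform1 x : qform 1%:M x = \sum_(k < r) x 0 k ^+ 2.
Proof. by rewrite /qform mulmx1 mxE; apply: eq_bigr => k _; rewrite mxE expr2. Qed.

Lemma qform1_ge0 x : 0 <= qform 1%:M x.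
Proof. by rewrite qform1 sumr_ge0 // => k _; rewrite sqr_ge0. Qed.

Lemma sqr_le_qform1 x k : x 0 k ^+ 2 <= qform 1%:M x.
Proof. by rewrite qform1 (bigD1 k) //= lerDl sumr_ge0 // => j _; rewrite sqr_ge0. Qed.

Lemma qform_norm_le B x :
  `|qform B x| <= (\sum_(k < r) \sum_(l < r) `|B k l|) * qform 1%:M x.
Proof.
rewrite qformE mulr_suml (le_trans (ler_norm_sum _ _ _)) // ler_sum // => k _.
rewrite mulr_suml (le_trans (ler_norm_sum _ _ _)) // ler_sum // => l _.
rewrite normrM mulrC ler_wpM2l //.
have := sqr_le_qform1 x k; have := sqr_le_qform1 x l.
(* AM-GM: [2 |a| |b| <= a^2 + b^2] *)
have := sqr_ge0 (`|x 0 k| - `|x 0 l|).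
rewrite normrM -[x 0 k ^+ 2]real_normK ?num_real //.
rewrite -[x 0 l ^+ 2]real_normK ?num_real //.
nra.
Qed.

Lemma qform_id_perturb_ge0 B :
  exists2 t : R, 0 < t & forall s x, `|s| <= t -> 0 <= qform (1%:M + s *: B) x.
Proof.
pose M := \sum_(k < r) \sum_(l < r) `|B k l|.
have M_ge0 : 0 <= M by rewrite !sumr_ge0 // => k _; rewrite sumr_ge0.
exists (M + 1)^-1; first by rewrite invr_gt0; lra.
move=> s x hs; rewrite qformD qformZ.
have hN := qform1_ge0 x; have hB := qform_norm_le B x; rewrite -/M in hB.
have hsM : `|s| * M <= 1.
  apply: le_trans (ler_wpM2r M_ge0 hs) _.
  by rewrite mulrC ler_pdivrMr ?mul1r; lra.
have sB_le : `|s| * `|qform B x| <= qform 1%:M x.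
  by apply: le_trans (ler_wpM2l (normr_ge0 s) hB) _; rewrite mulrA ler_piMl.
have := ler_norm (- (s * qform B x)); rewrite normrN normrM; lra.
Qed.

End QuadraticForm.

Section Congruence.
Context {R : rcfType} {n r : nat} {U : 'M[R]_(n, r)}.

Lemma congr_mx_diag (P : 'M[R]_r) i : (U *m P *m U^T) i i = qform P (row i U).
Proof.
rewrite /qform !mxE; apply: eq_bigr => j _; rewrite !mxE; congr (_ * _).
by apply: eq_bigr => k _; rewrite !mxE.
Qed.

Lemma psd_congr_mx (P : 'M[R]_r) :
  P^T = P -> (forall x, 0 <= qform P x) -> psd (U *m P *m U^T).
Proof.
move=> PT P_ge0; split; first by rewrite !trmx_mul trmxK PT mulmxA.
by move=> v; have := P_ge0 (v *m U); rewrite /qform trmx_mul !mulmxA.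
Qed.

Lemma row_full_congr_mx_eq0 {P : 'M[R]_r} :
  row_full U -> U *m P *m U^T = 0 -> P = 0.
Proof.
case/row_fullP=> X XU UPU0.
have -> : P = X *m (U *m P *m U^T) *m X^T.
  by rewrite !mulmxA XU mul1mx -mulmxA -trmx_mul XU trmx1 mulmx1.
by rewrite UPU0 mulmx0 mul0mx.
Qed.

End Congruence.

Lemma extreme_elliptope_sym_perturb {R : rcfType} {n : nat} {E W : 'M[R]_n} :
  extreme_elliptope E -> elliptope (E + W) -> elliptope (E - W) -> W = 0.
Proof.
case=> _ extE ellDW ellBW.
have /addrI : E + W = E - W.
  apply: (extE _ _ 2^-1) => //; rewrite ?invr_gt0 ?invf_lt1 ?ltr1n //.
  by apply/matrixP => i j; rewrite !mxE; field.
by move/eqP; rewrite -subr_eq0 opprK -mulr2n -scaler_nat scaler_eq0 pnatr_eq0 => /eqP.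
Qed.

Lemma extreme_gram_qform_eq0 {R : rcfType} {n r : nat} {U : 'M[R]_(n, r)}
    {C : 'M[R]_r} :
  extreme_elliptope (U *m U^T) -> row_full U ->
  (forall i, qform C (row i U) = 0) -> forall x, qform C x = 0.
Proof.
move=> extE fullU C_rows x.
pose B := C + C^T.
have BT : B^T = B by rewrite /B linearD /= trmxK addrC.
have qformB2 y : qform B y = qform C y *+ 2 by rewrite qformD qform_tr.
suff B0 : B = 0.
  have /eqP := qformB2 x.
  by rewrite B0 /qform mulmx0 mul0mx mxE eq_sym mulrn_eq0 => /eqP.
have [t t_gt0 psd_perturb] := qform_id_perturb_ge0 B.
pose W := U *m (t *: B) *m U^T.
have ell_perturb s : `|s| <= 1 -> elliptope (U *m U^T + s *: W).
  move=> s_le1.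
  have st_le : `|s * t| <= t by rewrite normrM (gtr0_norm t_gt0) ler_piMl // ltW.
  have -> : U *m U^T + s *: W = U *m (1%:M + (s * t) *: B) *m U^T.
    by rewrite /W mulmxDr mulmx1 mulmxDl -scalerA -!scalemxAr -!scalemxAl.
  split.
    apply: psd_congr_mx => [|y]; last exact: psd_perturb.
    by rewrite linearD linearZ /= BT trmx1.
  move=> i; rewrite congr_mx_diag qformD qformZ qformB2 C_rows mul0rn mulr0 addr0.
  by rewrite -congr_mx_diag mulmx1; case: extE => [[_ ->]].
have W0 : W = 0.
  apply: extreme_elliptope_sym_perturb extE _ _.
    by rewrite -[W]scale1r; apply: ell_perturb; rewrite normr1.
  by rewrite -scaleN1r; apply: ell_perturb; rewrite normrN normr1.
have /eqP := row_full_congr_mx_eq0 fullU W0.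
by rewrite scaler_eq0 gt_eqF //= => /eqP.
Qed.

Lemma extreme_gram_qform_eq {R : rcfType} {n r : nat} {U : 'M[R]_(n, r)}
    {C D : 'M[R]_r} :
  extreme_elliptope (U *m U^T) -> row_full U ->
  (forall i, qform C (row i U) = qform D (row i U)) ->
  forall x, qform C x = qform D x.
Proof.
move=> extE fullU CD_rows x; apply/eqP; rewrite -subr_eq0 -qformB; apply/eqP.
by apply: extreme_gram_qform_eq0 extE fullU _ x => i; rewrite qformB CD_rows subrr.
Qed.

Local Open Scope complex_scope.

Lemma complex_sum (R : pzRingType) (I : Type) (s : seq I) (P : pred I) (f g : I -> R) :
  \sum_(i <- s | P i) (f i +i* g i)
  = (\sum_(i <- s | P i) f i) +i* (\sum_(i <- s | P i) g i).
Proof.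
by elim: s => [|i s IHs]; rewrite ?big_nil ?big_cons //; case: (P i); rewrite IHs.
Qed.

Section QuadMapEntry.
Context {R : rcfType} {r d : nat}.
Implicit Types (H : 'I_r -> 'I_r -> 'M[R[i]]_d) (a b : 'I_d).

Definition Re_coef_mx H a b : 'M[R]_r := \matrix_(k, l) complex.Re (H k l a b).
Definition Im_coef_mx H a b : 'M[R]_r := \matrix_(k, l) complex.Im (H k l a b).

Lemma quad_map_entry H x a b :
  quad_map H x a b = qform (Re_coef_mx H a b) x +i* qform (Im_coef_mx H a b) x.
Proof.
rewrite /quad_map !qformE summxE -complex_sum; apply: eq_bigr => k _.
rewrite summxE -complex_sum; apply: eq_bigr => l _.
by rewrite !mxE; case: (H k l a b) => p q /=; congr (_ +i* _); ring.
Qed.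

End QuadMapEntry.

Theorem theorem2p3 (R : rcfType) (n r d : nat) (E : 'M[R]_n)
  (U : 'M[R]_(n, r)) (H1 H2 : 'I_r -> 'I_r -> 'M[R[i]]_d) :
  extreme_elliptope E ->
  \rank E = r ->
  E = Gram U ->
  row_full U ->
  (1 <= d)%N ->
  (forall k l, herm_mx (H1 k l)) ->
  (forall k l, herm_mx (H2 k l)) ->
  (forall i : 'I_n, quad_map H1 (row i U) = quad_map H2 (row i U)) ->
  forall x : 'rV[R]_r, quad_map H1 x = quad_map H2 x.
Proof.
move=> extE _ E_gram fullU _ _ _ H12_rows x; rewrite {}E_gram /Gram in extE.
apply/matrixP => a b.
have coef_rows i :
    qform (Re_coef_mx H1 a b) (row i U) = qform (Re_coef_mx H2 a b) (row i U) /\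
    qform (Im_coef_mx H1 a b) (row i U) = qform (Im_coef_mx H2 a b) (row i U).
  have := congr1 (fun M : 'M_d => M a b) (H12_rows i).
  by rewrite !quad_map_entry => -[-> ->].
rewrite !quad_map_entry.
by rewrite (extreme_gram_qform_eq extE fullU (fun i => (coef_rows i).1))
  (extreme_gram_qform_eq extE fullU (fun i => (coef_rows i).2)).
Qed.
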